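(* Let $\delta\ge1$ and suppose $G=(V,E,w)$ is a $\delta$-perturbation of a graph $G^*=(V,E,w^* )$ with perfect HC-structure. Let $\mathcal{R}$ be the set of constraints $\{i,j|k\}$, over all triples of distinct indices $i,j,k$, such that $w_{ij}>\delta^2\max\{w_{ik},w_{jk}\}$. Then there exists a binary HC-tree for $V$ that is consistent with every constraint in $\mathcal{R}$.
   Context: $G$ is a $\delta$-perturbation of $G^*$ if $\frac1\delta w(e)\le w^*(e)\le\delta w(e)$ for all $e\in E$; weights are symmetric, nonnegative, and $0$ on non-edges. An HC-tree for $V=\{v_1,\dots,v_n\}$ is a rooted tree with leaf set $V$. A tree $T$ is consistent with constraint $\{i,j|k\}$ if $\mathrm{LCA}(v_i,v_j)$ is a proper descendant of $\mathrm{LCA}(v_i,v_j,v_k)$ (relation $\{i,j|k\}$ holds in $T$); relation $\{i|j|k\}$ holds if $\mathrm{LCA}(v_i,v_j)=\mathrm{LCA}(v_j,v_k)=\mathrm{LCA}(v_i,v_j,v_k)$. Triplet cost $c_T(i,j,k)$: $w_{ik}+w_{jk}$ if $\{i,j|k\}$; $w_{ij}+w_{jk}$ if $\{i,k|j\}$; $w_{ij}+w_{ik}$ if $\{j,k|i\}$; $w_{ij}+w_{jk}+w_{ik}$ if $\{i|j|k\}$. $\mathrm{TC}(T)=\sum c_T(i,j,k)$, $\mathrm{BC}=\sum\min\{w_{ij}+w_{ik},w_{ij}+w_{jk},w_{ik}+w_{jk}\}$ over unordered triples of distinct indices; $\rho(T)=\mathrm{TC}(T)/\mathrm{BC}$ (with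 $0/0=1$, $x/0=+\infty$ for $x>0$), $\rho^*=\min_T\rho(T)$; perfect HC-structure means $\rho^*=1$ (computed with weights $w^*$ for $G^*$). *)

From mathcomp Require Import all_boot all_order all_algebra.
From mathcomp Require Import reals constructive_ereal.
Set Implicit Arguments. Unset Strict Implicit. Unset Printing Implicit Defensive.
Import Order.TTheory GRing.Theory Num.Theory.

Inductive hctree (T : Type) : Type :=
| Leaf of T
| Node of seq (hctree T).
Arguments Leaf {T}.
Arguments Node {T}.

Section Trees.
Variable T : eqType.

Fixpoint leaves (t : hctree T) : seq T :=
  match t with
  | Leaf v => [:: v]
  | Node cs => flatten (map leaves cs)
  end.

Fixpoint wf_tree (t : hctree T) : bool :=
  match t with
  | Leaf _ => true
  | Node cs => (1 < size cs) && all wf_tree cs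
  end.

Fixpoint binary_tree (t : hctree T) : bool :=
  match t with
  | Leaf _ => true
  | Node cs => (size cs == 2) && all binary_tree cs
  end.

(* each leaf paired with its address (path of child indices from the root) *)
Fixpoint leaf_addrs (t : hctree T) : seq (T * seq nat) :=
  match t with
  | Leaf v => [:: (v, [::])]
  | Node cs =>
      let fix go (i : nat) (l : seq (hctree T)) : seq (T * seq nat) :=
        match l with
        | [::] => [::]
        | c :: l' => map (fun p => (p.1, i :: p.2)) (leaf_addrs c) ++ go i.+1 l'
        end in
      go 0 cs
  end.

Definition addr (t : hctree T) (v : T) : seq nat :=
  (nth (v, [::]) (leaf_addrs t) (find (fun p => p.1 == v) (leaf_addrs t))).2.

(* longest common prefix of two addresses = address of the lowest common ancestor *)
Fixpoint lcp (s1 s2 : seq nat) : seq nat :=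
  match s1, s2 with
  | x :: s1', y :: s2' => if x == y then x :: lcp s1' s2' else [::]
  | _, _ => [::]
  end.

Definition LCA2 (t : hctree T) (a b : T) : seq nat := lcp (addr t a) (addr t b).
Definition LCA3 (t : hctree T) (a b c : T) : seq nat :=
  lcp (lcp (addr t a) (addr t b)) (addr t c).

Definition proper_desc (x y : seq nat) : bool := prefix y x && (x != y).

(* relation {a,b|c} holds in t *)
Definition rel_sep (t : hctree T) (a b c : T) : bool :=
  proper_desc (LCA2 t a b) (LCA3 t a b c).

Definition rel_star (t : hctree T) (a b c : T) : bool :=
  (LCA2 t a b == LCA3 t a b c) && (LCA2 t b c == LCA3 t a b c).

End Trees.

(* an HC-tree for V = 'I_n: leaf set is exactly V (each vertex once) *)
Definition hc_tree (n : nat) (t : hctree 'I_n) : bool :=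
  wf_tree t && perm_eq (leaves t) (enum 'I_n).

Definition binary_hc_tree (n : nat) (t : hctree 'I_n) : bool :=
  binary_tree t && perm_eq (leaves t) (enum 'I_n).

Section Costs.
Local Open Scope ring_scope.
Variables (R : realType) (n : nat).
Implicit Types (w : 'I_n -> 'I_n -> R) (t : hctree 'I_n).

(* triplet cost c_T(i,j,k); for distinct leaves exactly one of the four
   relations holds *)
Definition triplet_cost w t (i j k : 'I_n) : R :=
  if rel_sep t i j k then w i k + w j k
  else if rel_sep t i k j then w i j + w j k
  else if rel_sep t j k i then w i j + w i k
  else if rel_star t i j k then w i j + w j k + w i k
  else 0.

(* sums over unordered triples of distinct indices: i < j < k *)
Definition TC w t : R :=
  \sum_(i < n) \sum_(j < n | (i < j)%N) \sum_(k < n | (j < k)%N) triplet_cost w t i j k.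

Definition BC w : R :=
  \sum_(i < n) \sum_(j < n | (i < j)%N) \sum_(k < n | (j < k)%N)
     Num.min (w i j + w i k) (Num.min (w i j + w j k) (w i k + w j k)).

(* rho(T) = TC/BC with 0/0 = 1 and x/0 = +oo *)
Definition rho w t : \bar R :=
  if BC w == 0 :> R then (if TC w t == 0 :> R then (1%:E)%E else +oo%E)
  else ((TC w t / BC w)%:E)%E.

Definition perfect_HC w : Prop :=
  exists t, [/\ hc_tree t, rho w t = (1%:E)%E
           & forall t', hc_tree t' -> (rho w t <= rho w t')%E].

Definition weight_fn (E : rel 'I_n) w : Prop :=
  [/\ forall i j, w i j = w j i, forall i j, 0 <= w i j
    & forall i j, ~~ E i j -> w i j = 0].

Definition perturbation (E : rel 'I_n) (delta : R) w ws : Prop :=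
  forall i j, E i j -> w i j / delta <= ws i j <= delta * w i j.

End Costs.

(* A tree T with rho(T) = 1 for w* pays on every triple exactly the minimum
   min {w*_ij + w*_ik, w*_ij + w*_jk, w*_ik + w*_jk}: each triplet cost dominates
   its minimum and the two sums TC(T) and BC agree.  If w_ij > delta^2 max (w_ik, w_jk),
   the perturbation bounds give w*_ij > max (w*_ik, w*_jk), so that minimum is
   attained only by the relation {i,j|k}, which therefore holds in T.  Replacing
   every internal node of T by a right comb of its children makes T binary and
   keeps every relation {i,j|k}. *)

From mathcomp Require Import all_boot all_order all_algebra.
From mathcomp Require Import reals constructive_ereal lra zify.
Import Order.TTheory GRing.Theory Num.Theory.

Set Implicit Arguments.
Unset Strict Implicit.
Unset Printing Implicit Defensive.

Section Binarization.
Variable T : eqType.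
Implicit Types (u v x y z : T) (t c : hctree T) (cs : seq (hctree T)).

Fixpoint all_prop (P : hctree T -> Prop) cs : Prop :=
  if cs is c :: cs' then P c /\ all_prop P cs' else True.

Lemma hctree_nested_ind (P : hctree T -> Prop) :
  (forall v, P (Leaf v)) -> (forall cs, all_prop P cs -> P (Node cs)) ->
  forall t, P t.
Proof.
move=> PL PN; fix IH 1 => -[v|cs]; first exact: PL.
by apply: PN; elim: cs => [|c cs IHcs] //=; split.
Qed.

Lemma all_prop_nth P cs m :
  all_prop P cs -> m < size cs -> P (nth (Node [::]) cs m).
Proof. by elim: cs m => [|c cs IH] [|m] //= [Pc Pcs] ?; [|exact: IH]. Qed.

Fixpoint child_addrs (i : nat) cs : seq (T * seq nat) :=
  if cs is c :: cs' then
    map (fun p => (p.1, i :: p.2)) (leaf_addrs c) ++ child_addrs i.+1 cs'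
  else [::].

Lemma leaf_addrs_Node cs : leaf_addrs (Node cs) = child_addrs 0 cs.
Proof. by []. Qed.

Lemma map_fst_leaf_addrs t : map fst (leaf_addrs t) = leaves t.
Proof.
elim/hctree_nested_ind: t => [v|cs] //; rewrite leaf_addrs_Node /=.
elim: cs 0 => [|c cs IH] i //= [IHc IHcs].
by rewrite map_cat -map_comp IHc (IH i.+1).
Qed.

Definition lookup_addr v (l : seq (T * seq nat)) : seq nat :=
  (nth (v, [::]) l (find (fun p => p.1 == v) l)).2.

Lemma has_fst_eq v (l : seq (T * seq nat)) :
  has (fun p => p.1 == v) l = (v \in map fst l).
Proof. by rewrite -has_pred1 has_map. Qed.

Lemma lookup_addr_cat v l1 l2 :
  lookup_addr v (l1 ++ l2) =
  if v \in map fst l1 then lookup_addr v l1 else lookup_addr v l2.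
Proof.
rewrite /lookup_addr find_cat has_fst_eq nth_cat.
case Hv: (v \in map fst l1); last by rewrite ltnNge leq_addr /= addKn.
by rewrite -has_fst_eq has_find in Hv; rewrite Hv.
Qed.

Lemma lookup_addr_cons v i l : v \in map fst l ->
  lookup_addr v (map (fun p => (p.1, i :: p.2)) l) = i :: lookup_addr v l.
Proof.
by rewrite /lookup_addr find_map -has_fst_eq has_find => Hv; rewrite (nth_map (v, [::])).
Qed.

Definition child_index v cs : nat := find (fun c => v \in leaves c) cs.

Lemma mem_leaves_Node v cs : (v \in leaves (Node cs)) = has (fun c => v \in leaves c) cs.
Proof. by elim: cs => [|c cs IH] //=; rewrite mem_cat IH. Qed.

Lemma child_index_lt v cs : v \in leaves (Node cs) -> child_index v cs < size cs.
Proof. by rewrite mem_leaves_Node has_find. Qed.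

Lemma mem_child_index v cs :
  v \in leaves (Node cs) -> v \in leaves (nth (Node [::]) cs (child_index v cs)).
Proof. by rewrite mem_leaves_Node; apply: nth_find. Qed.

Lemma lookup_child_addrs v i cs : v \in leaves (Node cs) ->
  lookup_addr v (child_addrs i cs) =
  (i + child_index v cs) :: addr (nth (Node [::]) cs (child_index v cs)) v.
Proof.
elim: cs i => [|c cs IH] i //=; rewrite mem_cat /child_index /= => Hv.
rewrite lookup_addr_cat -map_comp map_fst_leaf_addrs.
case: ifP Hv => [Hc _|_ /= Hv]; last by rewrite IH // addSnnS.
by rewrite lookup_addr_cons ?map_fst_leaf_addrs ?addn0.
Qed.

Lemma addr_Node v cs : v \in leaves (Node cs) ->
  addr (Node cs) v = child_index v cs :: addr (nth (Node [::]) cs (child_index v cs)) v.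
Proof. exact: lookup_child_addrs. Qed.

Lemma rel_sep_Leaf u x y z : rel_sep (Leaf u) x y z = false.
Proof. by rewrite /rel_sep /LCA2 /LCA3 /addr /=; case: (u == x); case: (u == y). Qed.

Lemma rel_sep_Node cs x y z :
  x \in leaves (Node cs) -> y \in leaves (Node cs) -> z \in leaves (Node cs) ->
  rel_sep (Node cs) x y z =
  (child_index x cs == child_index y cs) &&
  ((child_index x cs != child_index z cs) ||
   rel_sep (nth (Node [::]) cs (child_index x cs)) x y z).
Proof.
move=> Hx Hy Hz; rewrite /rel_sep /LCA2 /LCA3 !addr_Node //=.
case: eqP => [<-|] //=; case: eqP => [<-|] /=.
  by rewrite /proper_desc /= eqseq_cons eqxx.
by rewrite /proper_desc /=.
Qed.

Fixpoint comb cs : hctree T :=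
  match cs with
  | [::] => Node [::]
  | [:: c] => c
  | c :: cs' => Node [:: c; comb cs']
  end.

Fixpoint binarize t : hctree T :=
  if t is Node cs then comb (map binarize cs) else t.

Lemma leaves_comb cs : leaves (comb cs) = leaves (Node cs).
Proof. by elim: cs => [|c [|c' cs] IH] //=; rewrite ?cats0 // IH. Qed.

Lemma leaves_binarize t : leaves (binarize t) = leaves t.
Proof.
elim/hctree_nested_ind: t => [v|cs] //=; rewrite leaves_comb /=.
by elim: cs => [|c cs IH] //= [-> /IH ->].
Qed.

Lemma binary_comb cs : 0 < size cs -> all (@binary_tree T) cs -> binary_tree (comb cs).
Proof.
by elim: cs => [|c [|c' cs] IH] //= _ /andP[-> Hcs]; rewrite ?andbT //= IH.
Qed.

Lemma binary_binarize t : wf_tree t -> binary_tree (binarize t).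
Proof.
elim/hctree_nested_ind: t => [v|cs IH] //= /andP[Hsize Hwf].
apply: binary_comb; first by case: cs Hsize {IH Hwf}.
by elim: cs IH Hwf {Hsize} => [|c cs IHcs] //= [IHc /IHcs IH] /andP[/IHc -> /IH].
Qed.

Lemma rel_sep_comb cs x y z :
  x \in leaves (Node cs) -> y \in leaves (Node cs) -> z \in leaves (Node cs) ->
  rel_sep (Node cs) x y z -> rel_sep (comb cs) x y z.
Proof.
elim: cs => [|c [|c' cs] IH] //.
  move=> Hx Hy Hz; rewrite rel_sep_Node //.
  by move: Hx Hy Hz; rewrite /= !cats0 /child_index /= => -> -> ->.
have -> : comb [:: c, c' & cs] = Node [:: c; comb (c' :: cs)] by [].
move: (c' :: cs) IH => rest IH Hx Hy Hz.
have Lrest : leaves (Node [:: c; comb rest]) = leaves (Node (c :: rest)).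
  by rewrite /= leaves_comb cats0.
rewrite rel_sep_Node // rel_sep_Node ?Lrest //.
move: Hx Hy Hz; rewrite /child_index /= leaves_comb !mem_cat.
case: (x \in leaves c); case: (y \in leaves c); case: (z \in leaves c) => //= Hx Hy Hz;
  rewrite ?Hx ?Hy ?Hz //= => Hsep.
by apply: IH; rewrite // rel_sep_Node.
Qed.

Lemma child_index_map_binarize v cs : child_index v (map binarize cs) = child_index v cs.
Proof. by rewrite /child_index find_map; apply: eq_find => c /=; rewrite leaves_binarize. Qed.

Lemma rel_sep_binarize t x y z :
  x \in leaves t -> y \in leaves t -> z \in leaves t ->
  rel_sep t x y z -> rel_sep (binarize t) x y z.
Proof.
elim/hctree_nested_ind: t => [u|cs IH]; first by rewrite rel_sep_Leaf.
have Lmap : leaves (Node (map binarize cs)) = leaves (Node cs).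
  by rewrite -leaves_comb (leaves_binarize (Node cs)).
move=> Hx Hy Hz Hsep /=; apply: rel_sep_comb; rewrite ?Lmap //; move: Hsep.
rewrite !rel_sep_Node ?Lmap // !child_index_map_binarize.
case/andP=> Exy; rewrite Exy /=; case: eqP => //= Exz.
rewrite (nth_map (Node [::])) ?child_index_lt //.
apply: (all_prop_nth IH (child_index_lt Hx)).
- exact: mem_child_index.
- by rewrite (eqP Exy); apply: mem_child_index.
- by rewrite Exz; apply: mem_child_index.
Qed.

End Binarization.

Section LongestCommonPrefix.
Implicit Types a b c : seq nat.

Lemma lcpC a b : lcp a b = lcp b a.
Proof.
elim: a b => [|x a IH] [|y b] //=; rewrite eq_sym.
by case: eqP => [->|] //; rewrite IH.
Qed.

Lemma lcpA a b c : lcp (lcp a b) c = lcp a (lcp b c).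
Proof.
elim: a b c => [|x a IH] [|y b] [|z c] //=; first by case: (x == y).
have [<-|Hxy] := eqVneq x y; have [<-|Hxz] := eqVneq x z => /=;
  rewrite ?eqxx ?IH // ?(negbTE Hxz) //; first by rewrite eq_sym (negbTE Hxy).
by case: eqVneq => //= _; rewrite (negbTE Hxy).
Qed.

Lemma prefix_lcp a b : prefix (lcp a b) a.
Proof.
elim: a b => [|x a IH] [|y b] //=.
by case: eqP => //= ->; rewrite eqxx IH.
Qed.

Definition lcp3 a b c := lcp (lcp a b) c.

Lemma lcp3_213 a b c : lcp3 b a c = lcp3 a b c.
Proof. by rewrite /lcp3 (lcpC b a). Qed.

Lemma lcp3_132 a b c : lcp3 a c b = lcp3 a b c.
Proof. by rewrite /lcp3 !lcpA (lcpC c b). Qed.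

Lemma lcp3_231 a b c : lcp3 b c a = lcp3 a b c.
Proof. by rewrite /lcp3 lcpC lcpA. Qed.

Lemma lcp_neq_lcp3 a b c : lcp a b != lcp3 a b c -> lcp a c = lcp3 a b c.
Proof.
rewrite /lcp3; elim: a b c => [|x a IH] [|y b] [|z c] //=; first by case: (x == y).
case: (x =P y) => [_|] //=; case: (x =P z) => [_|] //=.
by rewrite eqseq_cons eqxx => /IH ->.
Qed.

Lemma lcp3_excl a b c :
  [/\ lcp a b != lcp3 a b c -> lcp a c = lcp3 a b c,
      lcp a b != lcp3 a b c -> lcp b c = lcp3 a b c &
      lcp a c != lcp3 a b c -> lcp b c = lcp3 a b c].
Proof.
split; first exact: lcp_neq_lcp3.
  by rewrite -lcp3_213 lcpC => /lcp_neq_lcp3.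
by rewrite -lcp3_132 -[lcp3 a c b]lcp3_213 (lcpC a c) (lcpC b c) => /lcp_neq_lcp3.
Qed.

End LongestCommonPrefix.

Lemma rel_sep_lcp3 (T : eqType) (t : hctree T) x y z :
  rel_sep t x y z = (lcp (addr t x) (addr t y) != lcp3 (addr t x) (addr t y) (addr t z)).
Proof. by rewrite /rel_sep /proper_desc /LCA2 /LCA3 prefix_lcp. Qed.

Section RootCost.
Local Open Scope ring_scope.
Variable R : realDomainType.
Implicit Types (wab wac wbc : R) (a b c : seq nat).

(* [triplet_cost] as the total weight of the pairs whose LCA is the LCA of the
   whole triple; at most one pair branches off below it (lemma [lcp3_excl]). *)
Definition root_cost wab wac wbc a b c : R :=
  wab *+ (lcp a b == lcp3 a b c) + wac *+ (lcp a c == lcp3 a b c)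
  + wbc *+ (lcp b c == lcp3 a b c).

Definition min_cost wab wac wbc : R :=
  Num.min (wab + wac) (Num.min (wab + wbc) (wac + wbc)).

Lemma root_cost_213 wab wac wbc a b c :
  root_cost wab wac wbc a b c = root_cost wab wbc wac b a c.
Proof. by rewrite /root_cost (lcpC b a) lcp3_213 addrAC. Qed.

Lemma root_cost_132 wab wac wbc a b c :
  root_cost wab wac wbc a b c = root_cost wac wab wbc a c b.
Proof. by rewrite /root_cost (lcpC c b) lcp3_132 (addrC (wab *+ _)). Qed.

Lemma min_cost_213 wab wac wbc : min_cost wab wac wbc = min_cost wab wbc wac.
Proof. by rewrite /min_cost (addrC wbc wac) minCA. Qed.

Lemma min_cost_132 wab wac wbc : min_cost wab wac wbc = min_cost wac wab wbc.
Proof. by rewrite /min_cost (addrC wac wab) (minC (wac + wbc)). Qed.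

Lemma min_cost_le_root_cost wab wac wbc a b c :
  0 <= wab -> 0 <= wac -> 0 <= wbc ->
  min_cost wab wac wbc <= root_cost wab wac wbc a b c.
Proof.
move=> ge0ab ge0ac ge0bc; have [excl_ac excl_bc excl_bc'] := lcp3_excl a b c.
rewrite /root_cost /min_cost !ge_min.
case: eqVneq => [_|/[dup]/excl_ac -> /excl_bc ->]; rewrite ?eqxx /= ?mulr1n ?mulr0n;
  last by rewrite add0r lexx !orbT.
case: eqVneq => [_|/excl_bc' ->]; rewrite ?eqxx /= ?mulr1n ?mulr0n;
  last by rewrite addr0 lexx orbT.
by rewrite lerDl mulrn_wge0.
Qed.

Lemma root_cost_le_min_cost wab wac wbc a b c :
  0 <= wac -> 0 <= wbc -> wac < wab -> wbc < wab ->
  root_cost wab wac wbc a b c <= min_cost wab wac wbc -> lcp a b != lcp3 a b c.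
Proof.
move=> ge0ac ge0bc ltacab ltbcab; have [_ _ excl_bc] := lcp3_excl a b c.
rewrite /root_cost /min_cost !le_min; case: eqVneq => //= _.
case: eqVneq => [_|/excl_bc ->]; rewrite ?eqxx /= ?mulr1n ?mulr0n => /and3P[_ _];
  last by lra.
by have := mulrn_wge0 (lcp b c == lcp3 a b c) ge0bc; lra.
Qed.
End RootCost.



Section SortedTriples.
Local Open Scope ring_scope.
Variable n : nat.

Lemma distinct_triple_sym (P : 'I_n -> 'I_n -> 'I_n -> Prop) :
  (forall x y z, P x y z -> P y x z) -> (forall x y z, P x y z -> P x z y) ->
  (forall x y z : 'I_n, (x < y)%N -> (y < z)%N -> P x y z) ->
  forall x y z, x != y -> x != z -> y != z -> P x y z.
Proof.
move=> P_213 P_132 P_sorted x y z; rewrite -!(inj_eq val_inj) /= => nxy nxz nyz.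
case: (ltngtP x y) => xy; case: (ltngtP y z) => yz; case: (ltngtP x z) => xz;
  try by exfalso; lia.
- exact: P_sorted.
- by apply: (P_132); apply: P_sorted.
- by apply: (P_132); apply: (P_213); apply: P_sorted.
- by apply: (P_213); apply: P_sorted.
- by apply: (P_213); apply: (P_132); apply: P_sorted.
- by apply: (P_213); apply: (P_132); apply: (P_213); apply: P_sorted.
Qed.

Lemma psumr3_eq0 (R : numDomainType) (F : 'I_n -> 'I_n -> 'I_n -> R) :
  (forall x y z, 0 <= F x y z) ->
  \sum_(x < n) \sum_(y < n | (x < y)%N) \sum_(z < n | (y < z)%N) F x y z = 0 ->
  forall x y z : 'I_n, (x < y)%N -> (y < z)%N -> F x y z = 0.
Proof.
move=> F_ge0 sum0 x y z xy yz.
have sum_z_ge0 (x' y' : 'I_n) : 0 <= \sum_(z' < n | (y' < z')%N) F x' y' z'.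
  exact: sumr_ge0.
have sum_yz_ge0 (x' : 'I_n) :
    0 <= \sum_(y' < n | (x' < y')%N) \sum_(z' < n | (y' < z')%N) F x' y' z'.
  by apply: sumr_ge0 => y' _; apply: sum_z_ge0.
have {}sum0 : \sum_(y' < n | (x < y')%N) \sum_(z' < n | (y' < z')%N) F x y' z' = 0.
  by apply: (psumr_eq0P _ sum0) => // x' _; apply: sum_yz_ge0.
have {}sum0 : \sum_(z' < n | (y < z')%N) F x y z' = 0.
  by apply: (psumr_eq0P _ sum0) => // y' _; apply: sum_z_ge0.
by apply: (psumr_eq0P _ sum0).
Qed.

End SortedTriples.

Section TripletCosts.
Local Open Scope ring_scope.
Variables (R : realType) (n : nat).
Implicit Types (w : 'I_n -> 'I_n -> R) (t : hctree 'I_n).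

Lemma triplet_costE w t i j k :
  triplet_cost w t i j k =
  root_cost (w i j) (w i k) (w j k) (addr t i) (addr t j) (addr t k).
Proof.
rewrite /triplet_cost !rel_sep_lcp3.
set a := addr t i; set b := addr t j; set c := addr t k.
rewrite (lcp3_132 a b c) (lcp3_231 a b c).
have -> : rel_star t i j k = (lcp a b == lcp3 a b c) && (lcp b c == lcp3 a b c) by [].
have [excl_ac excl_bc excl_bc'] := lcp3_excl a b c.
rewrite /root_cost; case: eqVneq => [_|/[dup]/excl_ac -> /excl_bc ->] /=.
  case: eqVneq => [_|/excl_bc' ->] /=.
    by case: (eqVneq (lcp b c)) => _ /=; rewrite ?mulr1n ?mulr0n ?addr0 // addrAC.
  by rewrite eqxx mulr1n addr0.
by rewrite !eqxx mulr0n mulr1n add0r.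
Qed.

Lemma rho_eq1 w t : rho w t = 1%:E -> TC w t = BC w.
Proof.
rewrite /rho; case: (BC w =P 0) => [-> | _ [] /divr1_eq //].
by case: (TC w t =P 0) => // ->.
Qed.

Lemma TC_eq_BC_triplet_cost w t :
  (forall i j, w i j = w j i) -> (forall i j, 0 <= w i j) -> TC w t = BC w ->
  forall i j k, i != j -> i != k -> j != k ->
  triplet_cost w t i j k = min_cost (w i j) (w i k) (w j k).
Proof.
move=> wsym w_ge0 TC_BC.
pose D i j k := triplet_cost w t i j k - min_cost (w i j) (w i k) (w j k).
suff D0 : forall i j k, i != j -> i != k -> j != k -> D i j k = 0.
  by move=> i j k nij nik njk; apply/eqP; rewrite -subr_eq0; apply/eqP/D0.
have D_213 x y z : D x y z = D y x z.
  by rewrite /D !triplet_costE root_cost_213 min_cost_213 (wsym y x).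
have D_132 x y z : D x y z = D x z y.
  by rewrite /D !triplet_costE root_cost_132 min_cost_132 (wsym z y).
apply: (distinct_triple_sym (P := fun x y z => D x y z = 0)).
- by move=> x y z; rewrite D_213.
- by move=> x y z; rewrite D_132.
apply: psumr3_eq0 => [x y z|].
  by rewrite subr_ge0 triplet_costE min_cost_le_root_cost.
apply: etrans (_ : TC w t - BC w = 0); last by rewrite TC_BC subrr.
rewrite /TC /BC -sumrB; apply: eq_bigr => x _; rewrite -sumrB.
by apply: eq_bigr => y _; rewrite -sumrB.
Qed.

Lemma perturbation_gap E delta w ws i j k l :
  1 <= delta -> weight_fn E w -> weight_fn E ws -> perturbation E delta w ws ->
  delta ^+ 2 * w k l < w i j -> ws k l < ws i j.
Proof.
move=> delta_ge1 [_ w_ge0 w_nonedge] [_ ws_ge0 ws_nonedge] pert gap.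
have delta_gt0 : 0 < delta := lt_le_trans ltr01 delta_ge1.
have gap_ge0 : 0 <= delta ^+ 2 * w k l by rewrite mulr_ge0 ?exprn_ge0 ?w_ge0 ?ltW.
have Eij : E i j.
  by apply: contraTT gap => nEij; rewrite (w_nonedge _ _ nEij) -leNgt.
have ws_kl : ws k l <= delta * w k l.
  case Ekl: (E k l); first by case/andP: (pert k l Ekl).
  by rewrite ws_nonedge ?Ekl // mulr_ge0 ?w_ge0 ?ltW.
have ws_ij : w i j / delta <= ws i j by case/andP: (pert i j Eij).
have : delta * w k l < w i j / delta by rewrite ltr_pdivlMr // mulrC mulrA -expr2.
lra.
Qed.

End TripletCosts.

Local Open Scope ring_scope.

Theorem lemma6 (R : realType) (n : nat) (E : rel 'I_n)
    (w ws : 'I_n -> 'I_n -> R) (delta : R) :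
  1 <= delta ->
  (forall i j : 'I_n, E i j = E j i) -> (forall i : 'I_n, ~~ E i i) ->
  weight_fn E w -> weight_fn E ws ->
  perturbation E delta w ws ->
  perfect_HC ws ->
  exists t : hctree 'I_n, binary_hc_tree t /\
    forall i j k : 'I_n, i != j -> i != k -> j != k ->
      delta ^+ 2 * Num.max (w i k) (w j k) < w i j ->
      rel_sep t i j k.
Proof.
move=> delta_ge1 _ _ w_fn ws_fn pert [t [/andP[wf_t leaves_t] /rho_eq1 TC_BC _]].
have [ws_sym ws_ge0 _] := ws_fn.
exists (binarize t); split.
  by rewrite /binary_hc_tree binary_binarize //= leaves_binarize.
have mem_t v : v \in leaves t by rewrite (perm_mem leaves_t) mem_enum.
move=> i j k nij nik njk gap.
have gap_at l : w l k <= Num.max (w i k) (w j k) -> ws l k < ws i j.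
  move=> le_max; apply: (perturbation_gap delta_ge1 w_fn ws_fn pert).
  by apply: le_lt_trans gap; rewrite ler_wpM2l ?exprn_ge0 // (le_trans ler01 delta_ge1).
apply: rel_sep_binarize; rewrite ?mem_t // rel_sep_lcp3.
apply: (root_cost_le_min_cost (ws_ge0 i k) (ws_ge0 j k)).
- by apply: gap_at; rewrite le_max lexx.
- by apply: gap_at; rewrite le_max lexx orbT.
by rewrite -triplet_costE (TC_eq_BC_triplet_cost ws_sym ws_ge0 TC_BC).
Qed.
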